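(* Let $(X,<)$ be a Banach lattice with lattice norm $\|\cdot\|$, and let $\mathcal{R}$ be the almost summability on $\mathcal{D}_{\mathcal{R}}\subset X^{\mathbb{N}}$. Then $\mathcal{R}$ preserves order-inequalities.
   Context: A sequence $(x_k)$ in $X$ is almost convergent to $L\in X$ if $\frac{1}{m+1}\sum_{i=0}^m x_{n+i}\to L$ in norm as $m\to\infty$, uniformly in $n$; the almost summability $\mathcal{R}$ has as domain $\mathcal{D}_{\mathcal{R}}$ the almost convergent sequences and assigns their almost limit; write $x_n\overset{\mathcal{R}}{\longrightarrow}L$. For $u\in X$, $|u|=u\vee(-u)$. $\mathcal{R}$ preserves order-inequalities if: whenever $(w_n),(x_n),(y_n),(z_n)\in\mathcal{D}_{\mathcal{R}}$, $w,x,y,z\in X$ and $C>0$ satisfy, for all $n$, $-C[(x_n-x)+(y_n-y)+(z_n-z)]<w_n-w<C[(x_n-x)+(y_n-y)+(z_n-z)]$ in the lattice order, and $x_n\overset{\mathcal{R}}{\longrightarrow}x$, $y_n\overset{\mathcal{R}}{\longrightarrow}y$, $z_n\overset{\mathcal{R}}{\longrightarrow}z$, then $w_n\overset{\mathcal{R}}{\longrightarrow}w$. *)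

From HB Require Import structures.
From mathcomp Require Import all_boot all_order all_algebra.
From mathcomp Require Import all_classical all_reals all_analysis.
Set Implicit Arguments. Unset Strict Implicit. Unset Printing Implicit Defensive.
Import Order.TTheory GRing.Theory Num.Theory.
Import numFieldNormedType.Exports.
Local Open Scope ring_scope.

Record banach_lattice (R : realType) (V : completeNormedModType R) := BanachLattice {
  ble : V -> V -> Prop;
  bjoin : V -> V -> V;
  bmeet : V -> V -> V;
  ble_refl : forall x, ble x x;
  ble_trans : forall x y z, ble x y -> ble y z -> ble x z;
  ble_anti : forall x y, ble x y -> ble y x -> x = y;
  bjoin_ubl : forall x y, ble x (bjoin x y);
  bjoin_ubr : forall x y, ble y (bjoin x y);
  bjoin_least : forall x y z, ble x z -> ble y z -> ble (bjoin x y) z;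
  bmeet_lbl : forall x y, ble (bmeet x y) x;
  bmeet_lbr : forall x y, ble (bmeet x y) y;
  bmeet_greatest : forall x y z, ble z x -> ble z y -> ble z (bmeet x y);
  ble_add : forall x y z, ble x y -> ble (x + z) (y + z);
  ble_scale : forall (a : R) x y, 0 <= a -> ble x y -> ble (a *: x) (a *: y);
  lattice_norm : forall x y, ble (bjoin x (- x)) (bjoin y (- y)) -> `|x| <= `|y|
}.

Definition babs (R : realType) (V : completeNormedModType R)
  (B : banach_lattice V) (u : V) : V := bjoin B u (- u).

Definition almost_cvg (R : realType) (V : completeNormedModType R)
  (x : nat -> V) (L : V) : Prop :=
  forall eps : R, 0 < eps -> exists M : nat, forall m n : nat, (M <= m)%N ->
    `| (m.+1%:R)^-1 *: (\sum_(0 <= i < m.+1) x (n + i)%N) - L | < eps.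

Definition almost_convergent (R : realType) (V : completeNormedModType R)
  (x : nat -> V) : Prop := exists L, almost_cvg x L.

From HB Require Import structures.
From mathcomp Require Import all_boot all_order all_algebra.
From mathcomp Require Import all_classical all_reals all_analysis.
Import Order.TTheory GRing.Theory Num.Theory.
Import numFieldNormedType.Exports.
Local Open Scope ring_scope.
Set Implicit Arguments. Unset Strict Implicit.

(* Averaging over a window of length m+1 is linear and, in a Banach lattice,
   monotone. Averaging the hypothesis therefore sandwiches the window means of
   w_n - w between -S and S, where S is the window mean of
   s_n = C((x_n - x) + (y_n - y) + (z_n - z)); the lattice norm then bounds
   the former by ||S||, which tends to 0 uniformly in n by linearity. *)

Section WindowMean.
Variables (R : realType) (V : completeNormedModType R).
Implicit Types (f g : nat -> V) (c : V) (a : R) (m n : nat).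

Definition window_mean f m n : V :=
  (m.+1%:R : R)^-1 *: \sum_(0 <= i < m.+1) f (n + i)%N.

Lemma window_meanD f g m n :
  window_mean (fun k => f k + g k) m n = window_mean f m n + window_mean g m n.
Proof. by rewrite /window_mean big_split scalerDr. Qed.

Lemma window_meanZ a f m n :
  window_mean (fun k => a *: f k) m n = a *: window_mean f m n.
Proof. by rewrite /window_mean -scaler_sumr !scalerA mulrC. Qed.

Lemma window_meanN f m n :
  window_mean (fun k => - f k) m n = - window_mean f m n.
Proof. by rewrite /window_mean sumrN scalerN. Qed.

Lemma window_mean_cst c m n : window_mean (fun=> c) m n = c.
Proof.
rewrite /window_mean sumr_const_nat subn0 -(@scaler_nat R V).
by rewrite scalerA mulVf ?scale1r.
Qed.

Lemma window_meanB f c m n :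
  window_mean (fun k => f k - c) m n = window_mean f m n - c.
Proof. by rewrite (window_meanD f (fun=> - c)) window_mean_cst. Qed.

Lemma almost_cvgP f c : almost_cvg f c <->
  forall e : R, 0 < e -> \forall m \near \oo%classic, forall n, `|window_mean f m n - c| < e.
Proof.
split=> hf e /hf.
  by move=> [M hM]; exists M => // m /= hm n; exact: hM m n hm.
by move=> [M _ hM]; exists M => m n hm; exact: hM m hm n.
Qed.

End WindowMean.

Section AlmostConvergence.
Variables (R : realType) (V : completeNormedModType R).
Implicit Types (f g : nat -> V) (a : R) (c d : V).

Lemma subr_almost_cvg0 f c :
  almost_cvg (fun k => f k - c) 0 <-> almost_cvg f c.
Proof.
split=> /almost_cvgP hf; apply/almost_cvgP => e /hf; apply: filterS => m hm n;
  by have := hm n; rewrite window_meanB subr0.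
Qed.

Lemma almost_cvgD f g c d :
  almost_cvg f c -> almost_cvg g d -> almost_cvg (fun k => f k + g k) (c + d).
Proof.
move=> /almost_cvgP hf /almost_cvgP hg; apply/almost_cvgP => e e0.
near=> m => n.
rewrite window_meanD opprD addrACA (splitr e).
apply: le_lt_trans (ler_normD _ _) _; apply: ltrD; move: n.
- by near: m; apply: hf; rewrite divr_gt0.
- by near: m; apply: hg; rewrite divr_gt0.
Unshelve. all: by end_near.
Qed.

Lemma almost_cvgZ a f c : almost_cvg f c -> almost_cvg (fun k => a *: f k) (a *: c).
Proof.
move=> /almost_cvgP hf; apply/almost_cvgP => e e0.
have [->|a0] := eqVneq a 0.
  by near=> m => n; rewrite window_meanZ !scale0r subrr normr0.
near=> m => n; rewrite window_meanZ -scalerBr normrZ -ltr_pdivlMl ?normr_gt0 //.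
move: n; near: m; apply: hf.
by rewrite mulr_gt0 ?invr_gt0 ?normr_gt0.
Unshelve. all: by end_near.
Qed.

End AlmostConvergence.

Section BanachLatticeOrder.
Variables (R : realType) (V : completeNormedModType R) (B : banach_lattice V).
Implicit Types (a b c d : V) (f g s u : nat -> V).

Lemma bleD a b c d : ble B a b -> ble B c d -> ble B (a + c) (b + d).
Proof.
move=> hab hcd; apply: ble_trans (ble_add c hab) _.
by rewrite ![b + _]addrC; apply: ble_add.
Qed.

Lemma bleN a b : ble B a b -> ble B (- b) (- a).
Proof.
move=> hab; have := ble_add (- a - b) hab.
by rewrite addrA subrr add0r addrCA subrr addr0.
Qed.

Lemma ble_sum f g k : (forall i, ble B (f i) (g i)) ->
  ble B (\sum_(0 <= i < k) f i) (\sum_(0 <= i < k) g i).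
Proof.
move=> hfg; elim: k => [|k IHk]; first by rewrite !big_geq //; apply: ble_refl.
by rewrite !big_nat_recr //=; apply: bleD.
Qed.

Lemma ble_window_mean f g m n : (forall k, ble B (f k) (g k)) ->
  ble B (window_mean f m n) (window_mean g m n).
Proof. by move=> hfg; apply: ble_scale; rewrite ?invr_ge0 //; apply: ble_sum. Qed.

Lemma normr_le_sandwich a b : ble B (- b) a -> ble B a b -> `|a| <= `|b|.
Proof.
move=> hba hab; apply: lattice_norm; apply: bjoin_least.
  exact: ble_trans hab (bjoin_ubl _ _ _).
by apply: ble_trans (bjoin_ubl _ _ _); rewrite -[b]opprK; apply: bleN.
Qed.

Lemma almost_cvg_squeeze s u :
  (forall n, ble B (- s n) (u n)) -> (forall n, ble B (u n) (s n)) ->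
  almost_cvg s 0 -> almost_cvg u 0.
Proof.
move=> hsu hus /almost_cvgP hs; apply/almost_cvgP => e /hs.
apply: filterS => m hm n; apply: le_lt_trans (hm n); rewrite !subr0.
apply: normr_le_sandwich; last exact: ble_window_mean.
by rewrite -window_meanN; apply: ble_window_mean.
Qed.

End BanachLatticeOrder.

Theorem theorem3p6 (R : realType) (V : completeNormedModType R)
  (B : banach_lattice V) :
  forall (w x y z : nat -> V) (w0 x0 y0 z0 : V) (C : R),
    almost_convergent w -> almost_convergent x ->
    almost_convergent y -> almost_convergent z ->
    0 < C ->
    (forall n : nat,
       ble B (- (C *: ((x n - x0) + (y n - y0) + (z n - z0)))) (w n - w0) /\
       ble B (w n - w0) (C *: ((x n - x0) + (y n - y0) + (z n - z0)))) ->
    almost_cvg x x0 -> almost_cvg y y0 -> almost_cvg z z0 ->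
    almost_cvg w w0.
Proof.
move=> w x y z w0 x0 y0 z0 C _ _ _ _ _ hwxyz hx hy hz.
apply/subr_almost_cvg0.
apply: (almost_cvg_squeeze (fun n => (hwxyz n).1) (fun n => (hwxyz n).2)).
move: hx hy hz => /subr_almost_cvg0 hx /subr_almost_cvg0 hy /subr_almost_cvg0 hz.
by have := almost_cvgZ C (almost_cvgD (almost_cvgD hx hy) hz); rewrite !addr0 scaler0.
Qed.
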